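(* Let $\mathcal A$ be a finite alphabet, and for each $n\ge 0$ let $\sigma_n:\mathcal A^*\to\mathcal A^*$ be a monoid morphism whose incidence matrix $M(\sigma_n)$ is invertible. Suppose the directive sequence $(\sigma_n)_{n\ge0}$ is everywhere growing, and let $X$ be the subshift it generates. Then every invariant measure $\mu$ on $X$ is determined by the values $\mu([a])$, $a\in\mathcal A$; i.e. two invariant measures on $X$ which agree on all letter cylinders $[a]$, $a\in\mathcal A$, are equal.
   Context: For a finite alphabet $\mathcal A$, $\mathcal A^{\mathbb Z}$ carries the product topology and the shift map $T$. A subshift is a closed $T$-invariant ($T(X)=X$) subset. An invariant measure on $X$ is a finite $T$-invariant Borel measure on $\mathcal A^{\mathbb Z}$ with support in $X$. For $w=y_1\cdots y_n\in\mathcal A^*$, the cylinder $[w]$ is $\{x\in\mathcal A^{\mathbb Z}: x_i=y_i,\ i=1,\dots,n\}$. For a monoid morphism $\sigma:\mathcal A^*\to\mathcal A'^*$ the incidence matrix is $M(\sigma)=(|\sigma(a_j)|_{a'_i})_{i,j}$, where $|w|_x$ is the number of occurrences of the letter $x$ in $w$. The subshift generated by the directive sequence $(\sigma_n)_{n\ge0}$ consists of all $x\in\mathcal A^{\mathbb Z}$ such that every finite factor of $x$ is a factor of $\sigma_0\circ\cdots\circ\sigma_{n-1}(a)$ for some $n\ge0$ and $a\in\mathcal A$. The sequence is everywhere growing if $\min_{a\in\mathcal A}|\sigma_0\circ\cdots\circ\sigma_{n-1}(a)|\to\infty$ as $n\to\infty$. *)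

From HB Require Import structures.
From mathcomp Require Import all_boot all_order all_algebra.
From mathcomp Require Import all_classical all_reals all_analysis.
Set Implicit Arguments. Unset Strict Implicit. Unset Printing Implicit Defensive.
Import Order.TTheory GRing.Theory Num.Theory.
Local Open Scope classical_set_scope.
Local Open Scope ring_scope.

(* A monoid morphism sigma : A^* -> A^* is determined by the images of the
   letters; we represent it by  s : A -> seq A  and extend it to words. *)
Definition morph_app (A : finType) (s : A -> seq A) (w : seq A) : seq A :=
  flatten (map s w).

(* composition sigma_0 o sigma_1 o ... o sigma_{n-1} applied to a word *)
Fixpoint comp_prefix (A : finType) (sig : nat -> A -> seq A) (n : nat)
    (w : seq A) : seq A :=
  match n with
  | 0 => w
  | n'.+1 => comp_prefix sig n' (morph_app (sig n') w)
  end.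

(* incidence matrix M(sigma)_{i,j} = |sigma(a_j)|_{a_i}, letters enumerated
   by enum_val; entries taken in rat *)
Definition incidence_matrix (A : finType) (s : A -> seq A) : 'M[rat]_#|A| :=
  \matrix_(i < #|A|, j < #|A|) (count_mem (enum_val i) (s (enum_val j)))%:R.

Definition everywhere_growing (A : finType) (sig : nat -> A -> seq A) : Prop :=
  forall N : nat, exists n0 : nat, forall n : nat, (n0 <= n)%N ->
    forall a : A, (N <= size (comp_prefix sig n [:: a]))%N.

(* A finite alphabet is nonempty; measurable spaces in MathComp-Analysis
   must be pointed, so we equip A with a chosen letter a0. *)
Definition palph (A : finType) (a0 : A) : Type := A.
HB.instance Definition _ (A : finType) (a0 : A) :=
  Choice.copy (palph a0) A.
HB.instance Definition _ (A : finType) (a0 : A) :=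
  isPointed.Build (palph a0) a0.

Notation fullshift A a0 := {ptws int -> discrete_topology (@palph A a0)}.

Definition shift (A : finType) (a0 : A) (x : fullshift A a0) : fullshift A a0 :=
  fun i => x (i + 1).

Definition borel_shift (A : finType) (a0 : A) :=
  g_sigma_algebraType (@open (fullshift A a0)).

Definition factor_at (A : finType) (a0 : A) (x : fullshift A a0) (i : int) (k : nat)
  : seq A := [seq x (i + j%:Z) | j <- iota 0 k].

Definition gen_subshift (A : finType) (a0 : A) (sig : nat -> A -> seq A)
  : set (fullshift A a0) :=
  [set x | forall (i : int) (k : nat), exists (n : nat) (a : A),
     infix (factor_at x i k) (comp_prefix sig n [:: a])].

Definition cylinder (A : finType) (a0 : A) (w : seq A) : set (borel_shift a0) :=
  [set x : fullshift A a0 | forall j : nat, (j < size w)%N ->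
     x (j%:Z + 1) = nth (x 1) w j].

(* invariant measure on X: finite, shift-invariant Borel measure on A^Z
   with support in X, i.e. mu(A^Z \ X) = 0 *)
Definition invariant_measure_on (A : finType) (a0 : A) (R : realType)
    (X : set (fullshift A a0))
    (mu : {measure set (borel_shift a0) -> \bar R}) : Prop :=
  [/\ (mu setT < +oo)%E,
      (forall B : set (borel_shift a0), measurable B ->
         mu ((@shift A a0) @^-1` B) = mu B)
    & mu (~` X) = 0%E].

From Pilot Require Import Defs.
From HB Require Import structures.
From mathcomp Require Import all_boot all_order all_algebra.
From mathcomp Require Import all_classical all_reals all_analysis.
From mathcomp Require Import zify ring lra.
Import Order.TTheory GRing.Theory Num.Theory.
Set Implicit Arguments. Unset Strict Implicit. Unset Printing Implicit Defensive.

(* For an invariant measure mu on X, the function f(v) = mu([v]) on words is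
   a frequency: f(v) = sum_b f(vb) = sum_b f(bv) (additivity and shift
   invariance), f >= 0, and f vanishes off the language of the directive
   sequence (mu is carried by X).  The heart of the proof is combinatorial:
   two frequencies on the language that agree on letters agree on all words.
   Fix a nonempty word w and e > 0.  By growth, choose n such that the
   blocks sigma_0 o ... o sigma_{n-1}(a) are much longer than w; since their
   incidence matrix is invertible, there are coefficients g_b with
   |block(a)|_w = sum_b g_b |block(a)|_b for every letter a.  Cutting a long
   word v of the language into blocks shows |v|_w - sum_b g_b |v|_b =
   O(e |v|) + O(1).  Averaging against f over words of length K turns this
   into (K+1-|w|) f(w) - K sum_b g_b f(b) = O(e K + 1) f(empty); comparing
   two frequencies and letting K grow, then e shrink, gives f(w) = f'(w).
   Finally symmetric cylinders form a pi-system generating the Borel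
   sigma-algebra, so measures agreeing on all cylinders are equal. *)

Section Occurrences.
Variable A : eqType.
Implicit Types (w v a b c d : seq A).

Definition is_prefix w v : bool := take (size w) v == w.

Fixpoint occ w v : nat :=
  if v is x :: v' then is_prefix w v + occ w v' else 0.

Lemma is_prefix_size w v : is_prefix w v -> size w <= size v.
Proof.
by move/eqP/(congr1 size); rewrite size_take_min => <-; exact: geq_minr.
Qed.

Lemma is_prefix_catr w a b : is_prefix w a -> is_prefix w (a ++ b).
Proof. by move=> pwa; rewrite /is_prefix takel_cat ?is_prefix_size. Qed.

Lemma occ_le_size w v : occ w v <= size v.
Proof. by elim: v => //= x v IH; case: (is_prefix w _) => /=; lia. Qed.

Lemma occ_cat_ge w a b : occ w a + occ w b <= occ w (a ++ b).
Proof.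
elim: a => //= x a IH.
have := @is_prefix_catr w (x :: a) b.
by case: (is_prefix w (x :: a)); case: (is_prefix w (x :: a ++ b)) => /=; lia.
Qed.

(* ... and at most |w| further ones straddle the junction (indeed at most
   min(|a|, |w|), which is the form that goes through the induction) *)
Lemma occ_cat_le w a b : occ w (a ++ b) <= occ w a + occ w b + size w.
Proof.
suff: occ w (a ++ b) <= occ w a + occ w b + minn (size a) (size w) by lia.
elim: a => /= [|x a IH]; first lia.
have [le_w|lt_w] := leqP (size w) (size (x :: a)).
  rewrite -cat_cons /is_prefix takel_cat // -/(is_prefix w (x :: a)).
  by move: le_w IH => /=; case: (is_prefix w (x :: a)) => /=; lia.
move: lt_w IH => /=.
by case: (is_prefix w (x :: a)); case: (is_prefix w (x :: a ++ b)) => /=; lia.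
Qed.

Lemma occ1 (y : A) v : occ [:: y] v = count_mem y v.
Proof.
elim: v => //= x v ->; congr (_ + _).
by rewrite /is_prefix /= take0 eqseq_cons andbT eq_sym.
Qed.

Lemma cat_eq_split a b c d : a ++ b = c ++ d -> size a <= size c ->
  exists e, c = a ++ e /\ b = e ++ d.
Proof.
move=> E le_ac; exists (drop (size a) c).
have Ec : c = a ++ drop (size a) c.
  have := congr1 (take (size a)) E.
  rewrite take_size_cat // takel_cat // => Ea.
  by rewrite -{1}(cat_take_drop (size a) c) -Ea.
split=> //; have := congr1 (drop (size a)) E.
by rewrite drop_size_cat // => ->; rewrite {1}Ec -catA drop_size_cat.
Qed.

End Occurrences.

Section Images.
Variables (A : finType) (h : A -> seq A).
Implicit Types (w u v : seq A).

Lemma morph_app_cons x u : morph_app h (x :: u) = h x ++ morph_app h u.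
Proof. by []. Qed.

Lemma morph_app_cat u v : morph_app h (u ++ v) = morph_app h u ++ morph_app h v.
Proof. by rewrite /morph_app map_cat flatten_cat. Qed.

Lemma morph_app1 x : morph_app h [:: x] = h x.
Proof. by rewrite /morph_app /= cats0. Qed.

Lemma count_morph_app (y : A) u :
  count_mem y (morph_app h u) = \sum_(x <- u) count_mem y (h x).
Proof. by elim: u => [|x u IH]; rewrite ?big_nil // big_cons count_cat IH. Qed.

Lemma size_morph_app_ge m u : (forall x, m <= size (h x)) ->
  size u * m <= size (morph_app h u).
Proof.
move=> hm; elim: u => [|x u IH] //.
by rewrite morph_app_cons size_cat /= mulSn; have := hm x; lia.
Qed.

Lemma occ_morph_app_ge w u : \sum_(x <- u) occ w (h x) <= occ w (morph_app h u).
Proof.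
elim: u => [|x u IH]; rewrite ?big_nil // big_cons morph_app_cons.
by apply: leq_trans (occ_cat_ge _ _ _); lia.
Qed.

Lemma occ_morph_app_le w u :
  occ w (morph_app h u) <= \sum_(x <- u) occ w (h x) + size u * size w.
Proof.
elim: u => [|x u IH]; rewrite ?big_nil // big_cons morph_app_cons.
by apply: leq_trans (occ_cat_le _ _ _) _; rewrite /= mulSn; lia.
Qed.

Lemma occ_glued_ge w s u p :
  \sum_(x <- u) occ w (h x) <= occ w (s ++ morph_app h u ++ p).
Proof.
apply: leq_trans (occ_morph_app_ge _ _) _.
apply: leq_trans (occ_cat_ge _ _ _); apply: leq_trans (leq_addl _ _).
by apply: leq_trans (occ_cat_ge _ _ _); apply: leq_addr.
Qed.

Lemma occ_glued_le w s u p :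
  occ w (s ++ morph_app h u ++ p) <=
  \sum_(x <- u) occ w (h x) + size s + size p + size u * size w + 2 * size w.
Proof.
apply: leq_trans (occ_cat_le _ _ _) _.
have := occ_le_size w s; have := occ_le_size w p.
have := occ_cat_le w (morph_app h u) p; have := occ_morph_app_le w u.
(* simplification identifies the two views (eqType/finType) of the alphabet *)
move=> /= *; lia.
Qed.

Variable Mx : nat.
Hypothesis size_h_le : forall x, size (h x) <= Mx.

Lemma prefix_morph_app u v r : v ++ r = morph_app h u ->
  exists u' p, v = morph_app h u' ++ p /\ size p <= Mx.
Proof.
elim: u v => [|x u IH] v /=; first by case: v => // _; exists [::], [::].
move=> E; have [le_v|lt_v] := leqP (size v) (size (h x)).
  by exists [::], v; split => //; apply: leq_trans le_v (size_h_le x).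
have [e [-> Er]] := cat_eq_split (esym E) (ltnW lt_v).
have [u' [p [-> le_p]]] := IH _ (esym Er).
by exists (x :: u'), p; rewrite morph_app_cons catA.
Qed.

Lemma factor_morph_app u l v r : l ++ v ++ r = morph_app h u ->
  exists s u' p, [/\ v = s ++ morph_app h u' ++ p, size s <= Mx & size p <= Mx].
Proof.
elim: u l => [|x u IH] l E.
  have := congr1 size E; rewrite /morph_app /= !size_cat.
  case: v {E} => [|? ?] /= Es; last lia.
  by exists [::], [::], [::].
rewrite morph_app_cons in E.
have [le_l|lt_l] := leqP (size (h x)) (size l).
  by have [e [_ Er]] := cat_eq_split (esym E) le_l; exact: (IH e (esym Er)).
have [e [Ehx Er]] := cat_eq_split E (ltnW lt_l).
have le_e : size e <= Mx.
  by apply: leq_trans (size_h_le x); rewrite Ehx size_cat leq_addl.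
have [le_v|lt_v] := leqP (size v) (size e).
  exists v, [::], [::]; rewrite /morph_app /= cats0.
  by split => //; exact: leq_trans le_v le_e.
have [e' [-> Ee']] := cat_eq_split (esym Er) (ltnW lt_v).
have [u' [p [-> le_p]]] := prefix_morph_app (esym Ee').
by exists e, u', p.
Qed.

End Images.

Section LetterCounts.
Local Open Scope ring_scope.
Variable A : finType.

Lemma sum_seq_count (V : nmodType) (F : A -> V) (s : seq A) :
  \sum_(y <- s) F y = \sum_(a : A) F a *+ count_mem a s.
Proof.
elim: s => [|y s IH]; first by rewrite big_nil big1 // => a _; rewrite mulr0n.
rewrite big_cons IH /=.
under [RHS]eq_bigr => a _ do rewrite mulrnDr.
rewrite big_split /=; congr (_ + _).
rewrite (bigD1 y) //= eqxx mulr1n big1 ?addr0 // => a.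
by rewrite eq_sym => /negbTE ->; rewrite mulr0n.
Qed.

Lemma incidence_solve (h : A -> seq A) (o : A -> rat) :
  incidence_matrix h \in unitmx ->
  exists g : A -> rat, forall x, o x = \sum_(b : A) g b * (count_mem b (h x))%:R.
Proof.
move=> Hu; pose row : 'rV[rat]_#|A| := \row_j o (enum_val j).
pose gr := row *m invmx (incidence_matrix h).
have /rowP grM : gr *m incidence_matrix h = row by rewrite /gr mulmxKV.
exists (fun b => gr 0 (enum_rank b)) => x.
move: (grM (enum_rank x)); rewrite !mxE enum_rankK => <-.
rewrite (reindex _ (onW_bij _ (enum_rank_bij A))) /=.
apply: eq_bigr => b _; congr (_ * _).
by rewrite /incidence_matrix mxE !enum_rankK.
Qed.

End LetterCounts.

Section Compositions.
Variables (A : finType) (sig : nat -> A -> seq A).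

Definition block (n : nat) (a : A) : seq A := comp_prefix sig n [:: a].

Lemma comp_prefix_nil n : comp_prefix sig n [::] = [::].
Proof. by elim: n. Qed.

Lemma comp_prefix_cat n u v :
  comp_prefix sig n (u ++ v) = comp_prefix sig n u ++ comp_prefix sig n v.
Proof. by elim: n u v => //= n IH u v; rewrite morph_app_cat IH. Qed.

Lemma comp_prefix_blocks n u : comp_prefix sig n u = morph_app (block n) u.
Proof.
elim: u => [|x u IH]; first by rewrite comp_prefix_nil.
by rewrite -cat1s comp_prefix_cat IH.
Qed.

Lemma comp_prefix_add n k w :
  exists u, comp_prefix sig (n + k) w = comp_prefix sig n u.
Proof.
elim: k w => [|k IH] w; first by exists w; rewrite addn0.
by rewrite addnS; apply: IH.
Qed.

Lemma blockS n x : block n.+1 x = morph_app (block n) (sig n x).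
Proof. by rewrite /block /= morph_app1 comp_prefix_blocks. Qed.

Lemma incidence_blockS n :
  incidence_matrix (block n.+1) =
  (incidence_matrix (block n) *m incidence_matrix (sig n))%R.
Proof.
apply/matrixP => i j; rewrite !mxE blockS count_morph_app natr_sum.
rewrite (sum_seq_count (fun y => (count_mem (enum_val i) (block n y))%:R)%R).
rewrite (reindex _ (onW_bij _ (enum_val_bij A))) /=.
by apply: eq_bigr => k _; rewrite !mxE mulr_natr.
Qed.

Lemma incidence_block_unit :
  (forall n, incidence_matrix (sig n) \in unitmx) ->
  forall n, incidence_matrix (block n) \in unitmx.
Proof.
move=> units; elim=> [|n IH].
  2: by rewrite incidence_blockS unitmx_mul IH units.
suff -> : incidence_matrix (block 0) = 1%:M%R by exact: unitmx1.
apply/matrixP => i j; rewrite !mxE /block /= addn0.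
by rewrite (inj_eq enum_val_inj) eq_sym.
Qed.

End Compositions.

Section WordSums.
Local Open Scope ring_scope.
Variables (A : finType) (R : realType).
Implicit Types (F G : seq A -> R) (v w p : seq A).

Fixpoint sum_words (K : nat) F : R :=
  if K is K'.+1 then \sum_(b : A) sum_words K' (fun v => F (b :: v)) else F [::].

Lemma eq_sum_words K F G : (forall v, size v = K -> F v = G v) ->
  sum_words K F = sum_words K G.
Proof.
elim: K F G => [|K IH] F G FG /=; first exact: FG.
by apply: eq_bigr => b _; apply: IH => v Hv; apply: FG; rewrite /= Hv.
Qed.

Lemma ler_sum_words K F G : (forall v, size v = K -> F v <= G v) ->
  sum_words K F <= sum_words K G.
Proof.
elim: K F G => [|K IH] F G FG /=; first exact: FG.
by apply: ler_sum => b _; apply: IH => v Hv; apply: FG; rewrite /= Hv.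
Qed.

Lemma sum_words0 K : sum_words K (fun _ => 0) = 0.
Proof. by elim: K => //= K IH; rewrite big1. Qed.

Lemma sum_wordsD K F G :
  sum_words K (fun v => F v + G v) = sum_words K F + sum_words K G.
Proof.
elim: K F G => [|K IH] F G //=.
by rewrite -big_split /=; apply: eq_bigr => b _; rewrite IH.
Qed.

Lemma sum_wordsZ K c F : sum_words K (fun v => c * F v) = c * sum_words K F.
Proof.
elim: K F => [|K IH] F //=.
by rewrite mulr_sumr; apply: eq_bigr => b _; rewrite IH.
Qed.

Lemma sum_wordsB K F G :
  sum_words K (fun v => F v - G v) = sum_words K F - sum_words K G.
Proof.
rewrite -mulN1r -sum_wordsZ -sum_wordsD.
by apply: eq_sum_words => v _; rewrite mulN1r.
Qed.

Lemma sum_words_sum K (I : finType) (H : I -> seq A -> R) :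
  sum_words K (fun v => \sum_(i : I) H i v) = \sum_(i : I) sum_words K (H i).
Proof.
elim: K H => [|K IH] H //=.
by rewrite exchange_big /=; apply: eq_bigr => b _; exact: IH.
Qed.

Lemma norm_sum_words K F : `|sum_words K F| <= sum_words K (fun v => `|F v|).
Proof.
elim: K F => [|K IH] F //=.
by apply: le_trans (ler_norm_sum _ _ _) _; apply: ler_sum => b _; exact: IH.
Qed.

(* A word function f is consistent when f v = sum_b f (v b) = sum_b f (b v);
   the measures of cylinders under an invariant measure are an example. *)
Variable f : seq A -> R.
Hypothesis f_extR : forall v, f v = \sum_(b : A) f (rcons v b).
Hypothesis f_extL : forall v, f v = \sum_(b : A) f (b :: v).

Lemma sum_words_extR K p : sum_words K (fun v => f (p ++ v)) = f p.
Proof.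
elim: K p => [|K IH] p /=; first by rewrite cats0.
rewrite [RHS]f_extR; apply: eq_bigr => b _.
by rewrite -IH; apply: eq_sum_words => v _; rewrite cat_rcons.
Qed.

Lemma sum_words_f K : sum_words K f = f [::].
Proof. exact: (sum_words_extR K [::]). Qed.

Lemma sum_words_prefix w K p : (size w <= K)%N ->
  sum_words K (fun v => f (p ++ v) * (is_prefix w v)%:R) = f (p ++ w).
Proof.
elim: w K p => [|c w IH] K p le_wK.
  rewrite cats0 -(sum_words_extR K p); apply: eq_sum_words => v _.
  by rewrite /is_prefix take0 eqxx mulr1.
case: K le_wK => // K le_wK /=.
rewrite (bigD1 c) //= big1 ?addr0.
  rewrite -cat_rcons -(IH K) //; apply: eq_sum_words => v _.
  by rewrite /is_prefix /= eqseq_cons eqxx cat_rcons.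
move=> b /negbTE nbc; rewrite -(sum_words0 K); apply: eq_sum_words => v _.
by rewrite /is_prefix /= eqseq_cons nbc mulr0.
Qed.

Lemma sum_words_occ w K : w != [::] ->
  sum_words K (fun v => f v * (occ w v)%:R) = (K.+1 - size w)%:R * f w.
Proof.
move=> nzw; have w_gt0 : (0 < size w)%N by case: w nzw.
elim: K => [|K IH].
  by rewrite /= mulr0 (_ : (1 - size w)%N = 0%N) ?mul0r //; lia.
(* |b v|_w counts the occurrence of w at the start of b v, plus |v|_w *)
have -> : sum_words K.+1 (fun v => f v * (occ w v)%:R) =
    sum_words K.+1 (fun v => f v * (is_prefix w v)%:R) +
    sum_words K (fun v => f v * (occ w v)%:R).
  rewrite [in RHS](@eq_sum_words K _ (fun v =>
      \sum_(b : A) f (b :: v) * (occ w v)%:R)); last first.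
    by move=> v _; rewrite f_extL mulr_suml.
  rewrite sum_words_sum -big_split /=; apply: eq_bigr => b _.
  by rewrite -sum_wordsD; apply: eq_sum_words => v _; rewrite natrD mulrDr.
rewrite IH; have [le_wK|lt_Kw] := leqP (size w) K.+1.
  rewrite (@sum_words_prefix w K.+1 [::] le_wK) /=.
  by rewrite -[X in X + _]mul1r -mulrDl addrC natr1; congr (_%:R * _); lia.
rewrite (@eq_sum_words K.+1 _ (fun=> 0)) ?sum_words0 ?add0r.
  by congr (_%:R * _); lia.
move=> v sv; case pw: (is_prefix w v); last by rewrite mulr0.
by have := is_prefix_size pw; rewrite sv leqNgt lt_Kw.
Qed.

Lemma sum_words_count (b : A) K :
  sum_words K (fun v => f v * (count_mem b v)%:R) = K%:R * f [:: b].
Proof.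
rewrite -[K in RHS](subn0 K) -subSS -(sum_words_occ K (isT : [:: b] != [::])).
by apply: eq_sum_words => v _; rewrite occ1.
Qed.

End WordSums.

Section Discrepancy.
Local Open Scope ring_scope.
Variables (A : finType) (R : realType) (h : A -> seq A) (w : seq A) (g : A -> R).
Variables (mn Mx : nat) (e : R).
Hypothesis occ_h : forall x,
  (occ w (h x))%:R = \sum_(b : A) g b * (count_mem b (h x))%:R.
Hypothesis e_ge0 : 0 <= e.
Hypothesis size_h_le : forall x, (size (h x) <= Mx)%N.
Hypothesis size_h_ge : forall x, (mn <= size (h x))%N.
Hypothesis w_short : (size w)%:R <= e * mn%:R.

Definition discrepancy (v : seq A) : R :=
  (occ w v)%:R - \sum_(b : A) g b * (count_mem b v)%:R.

Definition discrepancy_bound : R :=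
  (2 * Mx + 2 * size w)%:R + 2 * Mx%:R * \sum_(b : A) `|g b|.

Lemma occ_blocks u : (\sum_(x <- u) occ w (h x))%:R =
  \sum_(b : A) g b * (count_mem b (morph_app h u))%:R.
Proof.
rewrite natr_sum; under eq_bigr => x _ do rewrite occ_h.
rewrite exchange_big /=; apply: eq_bigr => b _.
by rewrite -mulr_sumr -natr_sum count_morph_app.
Qed.

Lemma norm_ends_le (s p : seq A) : (size s <= Mx)%N -> (size p <= Mx)%N ->
  `|\sum_(b : A) g b * (count_mem b s + count_mem b p)%:R|
    <= 2 * Mx%:R * \sum_(b : A) `|g b|.
Proof.
move=> le_s le_p; apply: le_trans (ler_norm_sum _ _ _) _.
rewrite mulr_sumr; apply: ler_sum => b _; rewrite normrM normr_nat mulrC.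
apply: ler_wpM2r => //; rewrite -natrM ler_nat.
have := count_size (pred1 b) s; have := count_size (pred1 b) p.
by move=> /= *; lia.
Qed.

(* Write v = s h(u') p with short ends s, p: the blocks of h(u') contribute
   sum_b g_b |h(u')|_b exactly, the junctions at most |u'| |w| <= e |v|
   occurrences, and the ends O(Mx). *)
Lemma discrepancy_factor u v : infix v (morph_app h u) ->
  `|discrepancy v| <= (size v)%:R * e + discrepancy_bound.
Proof.
move=> /infixP [l [r E]].
have [s [u' [p [Ev le_s le_p]]]] := factor_morph_app size_h_le (esym E).
set S := (\sum_(x <- u') occ w (h x))%N.
have S_le : (S <= occ w v)%N by rewrite Ev occ_glued_ge.
have occ_le := occ_glued_le h w s u' p; rewrite -Ev -/S in occ_le.
have blocks_short : (size u')%:R * (size w)%:R <= (size v)%:R * e.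
  have : (size u' * mn <= size v)%N.
    apply: leq_trans (size_morph_app_ge u' size_h_ge) _.
    by rewrite Ev !size_cat addnCA leq_addr.
  rewrite -(ler_nat R) natrM => le_v.
  apply: le_trans (ler_wpM2l (ler0n _ _) w_short) _.
  by rewrite mulrCA mulrC ler_wpM2r.
have splitv : \sum_(b : A) g b * (count_mem b v)%:R = S%:R +
    \sum_(b : A) g b * (count_mem b s + count_mem b p)%:R.
  rewrite occ_blocks -big_split /=; apply: eq_bigr => b _.
  by rewrite -mulrDr -natrD Ev !count_cat addnCA.
have := norm_ends_le le_s le_p; rewrite ler_norml => /andP [lo hi].
move: S_le occ_le; rewrite -!(ler_nat R) !natrD !natrM => S_le occ_le.
have le_s' : (size s)%:R <= Mx%:R :> R by rewrite ler_nat.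
have le_p' : (size p)%:R <= Mx%:R :> R by rewrite ler_nat.
rewrite /discrepancy splitv /discrepancy_bound natrD !natrM.
by rewrite ler_norml; apply/andP; split; lra.
Qed.

End Discrepancy.

Section Frequencies.
Local Open Scope ring_scope.
Variables (A : finType) (R : realType) (sig : nat -> A -> seq A).

Definition language (v : seq A) : Prop :=
  exists n a, infix v (comp_prefix sig n [:: a]).

Definition frequency (L : seq A -> Prop) (f : seq A -> R) : Prop :=
  [/\ forall v, f v = \sum_(b : A) f (rcons v b),
      forall v, f v = \sum_(b : A) f (b :: v),
      forall v, 0 <= f v
    & forall v, f v != 0 -> L v].

Definition blocks_size (n : nat) : nat :=
  (\sum_(m < n) \sum_(a : A) size (block sig m a))%N.

Lemma language_long_factor n v : language v -> (blocks_size n < size v)%N ->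
  exists u, infix v (morph_app (block sig n) u).
Proof.
move=> [m [a inf_v]] long_v; have [lt_mn|le_nm] := ltnP m n.
  suff : (size v <= blocks_size n)%N by rewrite leqNgt long_v.
  apply: leq_trans (size_infix inf_v) _; rewrite /blocks_size.
  rewrite (bigD1 (Ordinal lt_mn)) //= (bigD1 a) //= -addnA.
  exact: leq_addr.
have [u Eu] := comp_prefix_add sig n (m - n) [:: a].
by exists u; rewrite -comp_prefix_blocks -Eu subnKC.
Qed.

(* Averaging the discrepancy of the level-n blocks against a frequency f
   over the words of length K: since sum_{|v|=K} f(v) |v|_w = (K+1-|w|) f(w)
   and sum_{|v|=K} f(v) |v|_b = K f(b), this yields an affine relation
   between f(w) and the letter frequencies f(b), up to (K e + D) f(empty). *)
Lemma frequency_estimate n w (g : A -> R) (mn Mx : nat) (e : R) f K :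
  (forall x, (occ w (block sig n x))%:R =
     \sum_(b : A) g b * (count_mem b (block sig n x))%:R) ->
  0 <= e -> (forall x, (size (block sig n x) <= Mx)%N) ->
  (forall x, (mn <= size (block sig n x))%N) -> (size w)%:R <= e * mn%:R ->
  w != [::] -> frequency language f -> (blocks_size n < K)%N ->
  `|(K.+1 - size w)%:R * f w - K%:R * \sum_(b : A) g b * f [:: b]| <=
    (K%:R * e + discrepancy_bound w g Mx) * f [::].
Proof.
move=> occ_h e_ge0 size_le size_ge w_short nzw [f_extR f_extL f_ge0 f_supp] lt_K.
have -> : (K.+1 - size w)%:R * f w - K%:R * \sum_(b : A) g b * f [:: b] =
    sum_words K (fun v => f v * discrepancy w g v).
  rewrite -(sum_words_occ f_extR f_extL K nzw) mulr_sumr.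
  under eq_bigr => b _
    do rewrite mulrCA -(sum_words_count f_extR f_extL b K) -sum_wordsZ.
  rewrite -sum_words_sum -sum_wordsB; apply: eq_sum_words => v _.
  rewrite /discrepancy mulrBr mulr_sumr; congr (_ - _).
  by apply: eq_bigr => b _; rewrite mulrCA.
apply: le_trans (norm_sum_words _ _) _.
rewrite -(sum_words_f f_extR K) -sum_wordsZ; apply: ler_sum_words => v sv.
rewrite normrM ger0_norm // mulrC.
have [->|nz_fv] := eqVneq (f v) 0; first by rewrite !mulr0.
apply: ler_wpM2r => //; move: lt_K; rewrite -sv => lt_K.
have [u inf_v] :=
  language_long_factor (f_supp v nz_fv) (lt_K : (blocks_size n < size v)%N).
exact: (discrepancy_factor occ_h e_ge0 size_le size_ge w_short inf_v).
Qed.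

(* With n large (growth) and the coefficients g of the level-n blocks
   (invertibility), the estimate holds with constants independent of f. *)
Lemma frequency_affine_estimate w e :
  (forall n, incidence_matrix (sig n) \in unitmx) -> everywhere_growing sig ->
  w != [::] -> 0 < e ->
  exists (c : A -> R) (D : R) (K0 : nat), forall f K,
    frequency language f -> (K0 < K)%N ->
    `|(K.+1 - size w)%:R * f w - K%:R * \sum_(b : A) c b * f [:: b]| <=
      (K%:R * e + D) * f [::].
Proof.
move=> units grow nzw e_gt0.
pose N := Num.Def.archi_bound ((size w)%:R / e).
have w_short : (size w)%:R <= e * N%:R.
  have := archi_boundP (divr_ge0 (ler0n R (size w)) (ltW e_gt0)).
  by rewrite ltr_pdivrMr // mulrC => /ltW.
have [n size_ge] := grow N.
pose Mx := (\sum_(a : A) size (block sig n a))%N.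
have size_le x : (size (block sig n x) <= Mx)%N.
  by rewrite /Mx (bigD1 x) //= leq_addr.
have [g occ_g] := incidence_solve (fun x => (occ w (block sig n x))%:R : rat)
  (incidence_block_unit units n).
exists (fun b => ratr (g b)), (discrepancy_bound w (fun b => ratr (g b)) Mx).
exists (blocks_size n) => f K f_freq lt_K.
apply: frequency_estimate (ltW e_gt0) size_le (size_ge n (leqnn n)) w_short
  nzw f_freq lt_K => x.
have := congr1 (@ratr R) (occ_g x); rewrite ratr_nat rmorph_sum => ->.
apply: eq_bigr => b _.
by rewrite rmorphM rmorph_nat.
Qed.

Lemma le_of_slope (d e c D : R) (K0 : nat) :
  (forall K, (K0 < K)%N -> (K%:R - c) * d <= K%:R * e + D) -> d <= e.
Proof.
move=> bound; rewrite leNgt; apply/negP => lt_ed.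
have X_ge0 : 0 <= `|D + c * d| / (d - e) by rewrite divr_ge0 // subr_ge0 ltW.
pose K := maxn K0.+1 (Num.Def.archi_bound (`|D + c * d| / (d - e))).
have := bound K (leq_maxl _ _).
have : `|D + c * d| / (d - e) < K%:R.
  by apply: lt_le_trans (archi_boundP X_ge0) _; rewrite ler_nat leq_maxr.
rewrite ltr_pdivrMr ?subr_gt0 // => big_K.
have := ler_norm (D + c * d); nra.
Qed.

Lemma scaled_dist_le (a x y S B : R) : 0 <= a ->
  `|a * x - S| <= B -> `|a * y - S| <= B -> a * `|x - y| <= 2 * B.
Proof.
move=> a_ge0 close_x close_y; rewrite -[a]ger0_norm // -normrM mulrBr.
rewrite (_ : a * x - a * y = (a * x - S) - (a * y - S)); last by ring.
by apply: le_trans (ler_normB _ _) _; lra.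
Qed.

(* Two frequencies on the language that agree on the letters agree on all
   words: their difference d at w satisfies (K - |w|) d <= 2 (K e + D) f(empty)
   for all large K, hence d <= 2 e f(empty) for every e > 0. *)
Theorem frequency_unique f f' :
  (forall n, incidence_matrix (sig n) \in unitmx) -> everywhere_growing sig ->
  frequency language f -> frequency language f' ->
  (forall b, f [:: b] = f' [:: b]) -> forall w, f w = f' w.
Proof.
move=> units grow ff ff' f_letters w.
have [f_extR _ f_ge0 _] := ff; have [f'_extR _ _ _] := ff'.
have f_empty : f' [::] = f [::].
  by rewrite (f_extR [::]) (f'_extR [::]); apply: eq_bigr => b _; rewrite f_letters.
have [->|nzw] := eqVneq w [::]; first by rewrite f_empty.
apply/eqP; rewrite -subr_eq0 -normr_le0; apply/ler_addgt0Pr => eps eps_gt0.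
have F0_ge0 := f_ge0 [::]; set F0 := f [::] in F0_ge0 f_empty *.
pose e := eps / (2 * F0 + 1).
have F0_pos : 0 < 2 * F0 + 1 by lra.
have e_eps : e * (2 * F0 + 1) = eps by rewrite divfK // gt_eqF.
have e_gt0 : 0 < e by rewrite divr_gt0.
have [c [D [K0 est]]] := frequency_affine_estimate units grow nzw e_gt0.
suff : `|f w - f' w| <= 2 * e * F0 + 0 by move=> ?; lra.
apply: (le_of_slope (c := (size w)%:R) (D := 2 * D * F0) (K0 := K0)) => K lt_K.
have := est f K ff lt_K; have := est f' K ff' lt_K; rewrite f_empty -/F0.
under eq_bigr => b _ do rewrite -f_letters.
move=> est' estf; have := scaled_dist_le (ler0n _ _) estf est'.
have le_K : K%:R - (size w)%:R <= (K.+1 - size w)%:R :> R.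
  by rewrite lerBlDr -natrD ler_nat addnC -leq_subLR leq_sub2r.
have := normr_ge0 (f w - f' w); nra.
Qed.

End Frequencies.

Section Cylinders.
Local Open Scope classical_set_scope.
Local Open Scope ring_scope.
Variables (A : finType) (a0 : A).
Local Notation T := (fullshift A a0).

Definition cyl_at (p : int) (v : seq A) : set T :=
  [set x | forall j : nat, (j < size v)%N -> x (p + j%:Z) = nth a0 v j].

Lemma cylinder_cyl_at v : @cylinder A a0 v = cyl_at 1 v.
Proof.
by apply/seteqP; split => x /= H j lt_j; rewrite addrC H // (set_nth_default a0).
Qed.

Lemma cyl_at_nil p : cyl_at p [::] = setT.
Proof. by apply/seteqP; split => x //= _ j. Qed.

Lemma cyl_at_cons p c v :
  cyl_at p (c :: v) = [set x : T | x p = c] `&` cyl_at (p + 1) v.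
Proof.
have E j : p + (j.+1)%:Z = p + 1 + j%:Z by rewrite intS addrA.
apply/seteqP; split => x /=.
  move=> H; split; first by have := H 0%N isT; rewrite addr0.
  by move=> j lt_j; rewrite -E (H j.+1).
by move=> [H1 H2] [|j] /= lt_j; [rewrite addr0 | rewrite E H2].
Qed.

Lemma cyl_atP p v (x : T) : cyl_at p v x <-> factor_at x p (size v) = v.
Proof.
split => [H|H j lt_j].
  rewrite /factor_at -[RHS](take_size v) -(map_nth_iota0 a0 (leqnn _)).
  by apply/eq_in_map => j; rewrite mem_iota add0n => /andP [_ lt_j]; exact: H.
by rewrite -[in RHS]H /factor_at (nth_map 0%N) ?size_iota // nth_iota.
Qed.

Lemma cyl_at_open p v : open (cyl_at p v).
Proof.
elim: v p => [|c v IH] p; first by rewrite cyl_at_nil; exact: openT.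
rewrite cyl_at_cons; apply: openI (IH _).
have -> : [set x : T | x p = c] =
    (@proj int (fun _ => discrete_topology (palph a0)) p) @^-1` [set c] by [].
by apply: open_comp; [move=> x _; exact: proj_continuous | exact: discrete_open].
Qed.

Lemma cyl_at_measurable p v : measurable (cyl_at p v : set (borel_shift a0)).
Proof. by apply: sub_gen_smallest; exact: cyl_at_open. Qed.

Lemma shift_cyl_at p v : (@Defs.shift A a0) @^-1` (cyl_at p v) = cyl_at (p + 1) v.
Proof.
by apply/seteqP; split => x /= H j lt_j; rewrite -H //= /Defs.shift; congr x; ring.
Qed.

Lemma cyl_at_rcons p v :
  cyl_at p v = \big[setU/set0]_(b <- index_enum A) cyl_at p (rcons v b).
Proof.
rewrite -bigcup_seq; apply/seteqP; split => x.
  move=> H; exists (x (p + (size v)%:Z)); first exact: mem_index_enum.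
  move=> j; rewrite size_rcons ltnS leq_eqVlt nth_rcons => /orP [/eqP ->|lt_j].
    by rewrite ltnn eqxx.
  by rewrite lt_j; exact: H.
move=> [b _ H] j lt_j.
by rewrite H ?size_rcons 1?ltnW // nth_rcons lt_j.
Qed.

Lemma cyl_at_cons_union p v :
  cyl_at (p + 1) v = \big[setU/set0]_(b <- index_enum A) cyl_at p (b :: v).
Proof.
rewrite -bigcup_seq; apply/seteqP; split => x.
  by move=> H; exists (x p); [exact: mem_index_enum | rewrite cyl_at_cons].
by move=> [b _]; rewrite cyl_at_cons => -[].
Qed.

Lemma cyl_at_rcons_disj p v b c : b != c ->
  cyl_at p (rcons v b) `&` cyl_at p (rcons v c) = set0.
Proof.
move=> nbc; apply/seteqP; split => x //= [H1 H2].
have last_letter d : cyl_at p (rcons v d) x -> x (p + (size v)%:Z) = d.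
  by move=> H; rewrite H ?size_rcons // nth_rcons ltnn eqxx.
by move: nbc; rewrite -(last_letter b H1) -(last_letter c H2) eqxx.
Qed.

Lemma cyl_at_cons_disj p v b c : b != c ->
  cyl_at p (b :: v) `&` cyl_at p (c :: v) = set0.
Proof.
move=> nbc; apply/seteqP; split => x //=; rewrite !cyl_at_cons => -[[Eb _] [Ec _]].
by move: nbc; rewrite -Eb -Ec eqxx.
Qed.

End Cylinders.

Section SubshiftMeasurable.
Local Open Scope classical_set_scope.
Variables (A : finType) (a0 : A) (sig : nat -> A -> seq A).
Local Notation T := (fullshift A a0).

Definition window_in_language (i : int) (k : nat) : set T :=
  [set x | language sig (factor_at x i k)].

(* a finite union of cylinders *)
Lemma window_in_language_measurable i k :
  measurable (window_in_language i k : set (borel_shift a0)).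
Proof.
have -> : window_in_language i k =
    \bigcup_(t in [set t : k.-tuple A | language sig t]) @cyl_at A a0 i t.
  apply/seteqP; split => x /=.
    move=> lang_x; have size_k : size (factor_at x i k) == k.
      by rewrite size_map size_iota.
    by exists (Tuple size_k) => //; apply/cyl_atP; rewrite /= (eqP size_k).
  move=> [t lang_t /cyl_atP]; rewrite size_tuple => E.
  by rewrite /window_in_language /= E.
apply: fin_bigcup_measurable; first exact: finite_finset.
by move=> t _; exact: cyl_at_measurable.
Qed.

(* the complement of X is a countable union of complements of windows *)
Lemma gen_subshiftC_measurable :
  measurable (~` @gen_subshift A a0 sig : set (borel_shift a0)).
Proof.
have -> : ~` @gen_subshift A a0 sig =
    \bigcup_(q : int * nat) ~` window_in_language q.1 q.2.
  apply/seteqP; split => x /=.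
    by move/existsNP => [i /existsNP [k notin]]; exists (i, k).
  by move=> [[i k] _ notin] inX; apply: notin; exact: inX.
apply: countable_bigcupT_measurable; first exact: countableP.
by move=> q; apply: measurableC; exact: window_in_language_measurable.
Qed.

End SubshiftMeasurable.

Section FiniteAdditivity.
Local Open Scope classical_set_scope.
Local Open Scope ring_scope.

Lemma measure_big_setU d (T : measurableType d) (R : realType)
    (mu : {measure set T -> \bar R}) (I : choiceType) (C : I -> set T) (s : seq I) :
  uniq s -> (forall i, measurable (C i)) ->
  (forall i j, i != j -> C i `&` C j = set0) ->
  mu (\big[setU/set0]_(i <- s) C i) = (\sum_(i <- s) mu (C i))%E.
Proof.
move=> + mC disjC; elim: s => [|c s IH]; first by rewrite !big_nil measure0.
move=> /= /andP [c_notin uniq_s]; rewrite !big_cons measureU //.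
- by congr (_ + _)%E; exact: IH.
- exact: bigsetU_measurable.
rewrite -bigcup_seq; apply/seteqP; split => x //= [Cx [i si Ci]].
have nci : c != i by apply: contraNneq c_notin => ->.
by have := disjC _ _ nci; move/seteqP => [/(_ x (conj Cx Ci))].
Qed.

End FiniteAdditivity.

Section CylinderFrequency.
Local Open Scope classical_set_scope.
Local Open Scope ring_scope.
Variables (A : finType) (a0 : A) (R : realType) (sig : nat -> A -> seq A).
Variable mu : {measure set (borel_shift a0) -> \bar R}.
Hypothesis mu_inv : invariant_measure_on (@gen_subshift A a0 sig) mu.
Local Notation cyl := (@cyl_at A a0).

Lemma cyl_fin_num p v : mu (cyl p v) \is a fin_num.
Proof.
have [mu_fin _ _] := mu_inv.
rewrite ge0_fin_numE ?measure_ge0 //; apply: le_lt_trans mu_fin.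
apply: le_measure => //; rewrite inE; first exact: cyl_at_measurable.
exact: measurableT.
Qed.

(* by shift invariance, the measure of a cylinder does not depend on its
   position: first for translations to the right, then for all of them *)
Lemma mu_cyl_add p (n : nat) v : mu (cyl (p + n%:Z) v) = mu (cyl p v).
Proof.
have [_ mu_shift _] := mu_inv.
elim: n => [|n IH]; first by rewrite addr0.
rewrite -IH (_ : p + n.+1%:Z = p + n%:Z + 1); last by rewrite intS; ring.
by rewrite -shift_cyl_at mu_shift //; exact: cyl_at_measurable.
Qed.

Lemma mu_cyl_pos p v : mu (cyl p v) = mu (cyl 1 v).
Proof.
have [le1p|ltp1] := lerP 1 p.
  by rewrite -(mu_cyl_add 1 (absz (p - 1))); congr (mu (cyl _ v)); lia.
by rewrite -(mu_cyl_add p (absz (1 - p))); congr (mu (cyl _ v)); lia.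
Qed.

Definition cyl_freq (v : seq A) : R := fine (mu (cyl 1 v)).

Lemma cyl_freqE v : mu (cyl 1 v) = (cyl_freq v)%:E.
Proof. by rewrite fineK // cyl_fin_num. Qed.

(* consistency comes from the cylinder partitions, nonnegativity from mu,
   and the support condition from mu(~` X) = 0 *)
Lemma cyl_freq_frequency : frequency (language sig) cyl_freq.
Proof.
have [_ _ mu_out] := mu_inv.
have sum_freq (C : A -> seq A) q q' v :
    cyl q' v = \big[setU/set0]_(b <- index_enum A) cyl q (C b) ->
    (forall b c, b != c -> cyl q (C b) `&` cyl q (C c) = set0) ->
    cyl_freq v = \sum_(b : A) cyl_freq (C b).
  move=> E disj; apply: EFin_inj.
  rewrite -sumEFin -cyl_freqE -(mu_cyl_pos q') E measure_big_setU //.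
  - by apply: eq_bigr => b _; rewrite mu_cyl_pos cyl_freqE.
  - exact: index_enum_uniq.
  - by move=> b; exact: cyl_at_measurable.
split=> [v|v|v|v].
- apply: (sum_freq (rcons v) 1 1); last exact: cyl_at_rcons_disj.
  exact: cyl_at_rcons.
- apply: (sum_freq (cons^~ v) 0 1); last exact: cyl_at_cons_disj.
  exact: (cyl_at_cons_union a0 0).
- exact/fine_ge0/measure_ge0.
- apply: contra_neqP => not_lang.
  have notX := @gen_subshiftC_measurable A a0 sig.
  rewrite /cyl_freq (subset_measure0 _ notX _ mu_out) //.
    exact: cyl_at_measurable.
  move=> x cyl_x inX; apply: not_lang; move/cyl_atP: cyl_x => <-.
  exact: inX.
Qed.

End CylinderFrequency.

Section SymmetricCylinders.
Local Open Scope classical_set_scope.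
Local Open Scope ring_scope.
Variables (A : finType) (a0 : A).
Local Notation T := (fullshift A a0).
Local Notation cyl := (@cyl_at A a0).

Lemma open_window (O : set T) (x : T) : open O -> O x ->
  exists N : nat, forall y : T, (forall i : int, (absz i < N)%N -> y i = x i) -> O y.
Proof.
move=> oO Ox.
pose window (N : nat) := [set y : T | forall i : int, (absz i < N)%N -> y i = x i].
pose F := filter_from [set: nat] window.
have FF : Filter F.
  apply: filter_from_filter; first by exists 0%N.
  move=> i j _ _; exists (maxn i j) => // y Hy.
  by split => k lt_k; apply: Hy; rewrite leq_max lt_k ?orbT.
have cvg_x : F --> (x : product_topology_def
                          (fun _ : int => discrete_topology (palph a0))).
  apply/cvg_sup => i.
  have proj_onto : [set f i | f in [set: T]] = [set: palph a0].
    by apply/seteqP; split => // a _; exists (fun _ => a).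
  apply/cvg_image => // C; rewrite nbhs_principalE => HC.
  exists ((fun f : T => f i) @^-1` C); last exact: image_preimage.
  by exists (absz i).+1 => // y Hy; apply: HC; rewrite /= Hy.
have [N _ near_x] : F O by apply: cvg_x; apply: open_nbhs_nbhs.
by exists N => y /near_x.
Qed.

Definition sym_cylinders : set (set (borel_shift a0)) :=
  [set C | C = set0 \/ exists (N : nat) (t : (N.*2).-tuple A), C = cyl (- N%:Z) t].

Lemma sym_cyl_nested N M (t s : seq A) (x : T) : (N <= M)%N -> size t = N.*2 ->
  size s = M.*2 -> cyl (- N%:Z) t x -> cyl (- M%:Z) s x ->
  cyl (- M%:Z) s `<=` cyl (- N%:Z) t.
Proof.
move=> le_NM size_t size_s tx sx y sy j lt_j.
have lt_j' : (M - N + j < size s)%N.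
  by rewrite size_s; rewrite size_t in lt_j; rewrite -!addnn in lt_j *; lia.
have E : - N%:Z + j%:Z = - M%:Z + (M - N + j)%:Z by lia.
by rewrite E sy // -(sx _ lt_j') -E tx.
Qed.

Lemma sym_cylinders_setI : setI_closed sym_cylinders.
Proof.
move=> C1 C2 [->|[N [t ->]]]; first by left; rewrite set0I.
move=> [->|[M [s ->]]]; first by left; rewrite setI0.
have [|/eqP/set0P [x [tx sx]]] := pselect (cyl (- N%:Z) t `&` cyl (- M%:Z) s = set0).
  by left.
right; have [le_NM|lt_MN] := leqP N M.
  exists M, s; apply/seteqP; split => [y [] //|y sy]; split => //.
  exact: (sym_cyl_nested le_NM (size_tuple t) (size_tuple s) tx sx).
exists N, t; apply/seteqP; split => [y [] //|y ty]; split => //.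
exact: (sym_cyl_nested (ltnW lt_MN) (size_tuple s) (size_tuple t) sx tx).
Qed.

Lemma open_sym_cylinders (O : set (borel_shift a0)) :
  open (O : set T) -> <<s sym_cylinders >> O.
Proof.
move=> oO.
have -> : O = \bigcup_(N : nat)
    \bigcup_(t in [set t : (N.*2).-tuple A | cyl (- N%:Z) t `<=` O]) cyl (- N%:Z) t.
  apply/seteqP; split => x; last by move=> [N _ [t sub_t tx]]; exact: sub_t.
  move=> Ox; have [N near_x] := open_window oO Ox.
  have size_f : size (factor_at x (- N%:Z) N.*2) == N.*2 by rewrite size_map size_iota.
  have fx : cyl (- N%:Z) (Tuple size_f) x by apply/cyl_atP; rewrite /= (eqP size_f).
  exists N => //; exists (Tuple size_f) => // y /= fy; apply: near_x => i lt_i.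
  have Ei : i = - N%:Z + (absz (i + N%:Z))%:Z by lia.
  have lt_j : (absz (i + N%:Z)%R < size (Tuple size_f))%N.
    by rewrite /= (eqP size_f); lia.
  by rewrite Ei fy // fx.
apply: (@bigcupT_measurable _ (g_sigma_algebraType sym_cylinders)) => N.
apply: (@fin_bigcup_measurable _ (g_sigma_algebraType sym_cylinders)).
  exact: finite_finset.
by move=> t _; apply: sub_gen_smallest; right; exists N, t.
Qed.

Lemma measurable_sym_cylinders :
  @measurable _ (borel_shift a0) = <<s sym_cylinders >>.
Proof.
apply/seteqP; split; apply: smallest_sub; do ?exact: smallest_sigma_algebra.
  exact: open_sym_cylinders.
by move=> C [->|[N [t ->]]]; [exact: measurable0 | exact: cyl_at_measurable].
Qed.

End SymmetricCylinders.

Unset Implicit Arguments.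
Local Open Scope classical_set_scope.
Local Open Scope ring_scope.

(* Invariant measures on X agreeing on the letter cylinders have the same
   cylinder frequencies (frequency_unique), hence agree on the pi-system of
   symmetric cylinders, which generates the Borel sets (measure_unique). *)

Theorem corollary2 (A : finType) (a0 : A) (R : realType)
    (sig : nat -> A -> seq A) :
  (forall n : nat, incidence_matrix (sig n) \in unitmx) ->
  everywhere_growing sig ->
  forall mu nu : {measure set (borel_shift a0) -> \bar R},
    invariant_measure_on (@gen_subshift A a0 sig) mu ->
    invariant_measure_on (@gen_subshift A a0 sig) nu ->
    (forall a : A, mu (@cylinder A a0 [:: a]) = nu (@cylinder A a0 [:: a])) ->
    forall B : set (borel_shift a0), measurable B -> mu B = nu B.
Proof.
move=> units grow mu nu mu_inv nu_inv letters.
have freq_eq : forall w, cyl_freq mu w = cyl_freq nu w.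
  apply: (frequency_unique units grow (cyl_freq_frequency mu_inv)
    (cyl_freq_frequency nu_inv)) => b.
  by rewrite /cyl_freq -cylinder_cyl_at letters.
have cyl_eq p v : mu (@cyl_at A a0 p v) = nu (@cyl_at A a0 p v).
  rewrite (mu_cyl_pos mu_inv) (mu_cyl_pos nu_inv).
  by rewrite (cyl_freqE mu_inv) (cyl_freqE nu_inv) freq_eq.
apply: (measure_unique (@sym_cylinders A a0) (fun=> setT)).
- exact: measurable_sym_cylinders.
- exact: sym_cylinders_setI.
- by move=> _; right; exists 0%N, [tuple]; rewrite cyl_at_nil.
- by apply/seteqP; split => // x _; exists 0%N.
- by move=> C [->|[N [t ->]]]; [rewrite !measure0 | exact: cyl_eq].
- by move=> _; case: mu_inv.
Qed.
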